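(* Let $X$ be a finite poset and let $f\colon X\to\mathbb R$ be a Morse function satisfying the Exclusion condition. Then the associated set $\mathcal M_f=\{(w,x)\in X\times X: w\prec x,\ f(w)\ge f(x)\}$ is a Morse matching on $X$ whose set of critical points equals the set of critical points of $f$. In particular, if $X$ is a finite two-wide poset and $f\colon X\to\mathbb R$ is any Morse function, then $\mathcal M_f$ is a Morse matching with $\mathrm{crit}(f)=\mathrm{crit}(\mathcal M_f)$.
   Context: In a poset, write $a\prec b$ if $a<b$ and there is no $c$ with $a<c<b$; the Hasse diagram $\mathcal H(X)$ is the directed graph with edges $a\to b$ for $a\prec b$. A Morse function on a finite poset $X$ is a map $f\colon X\to\mathbb R$ such that for every $x\in X$, $\#\{y: x\prec y,\ f(x)\ge f(y)\}\le1$ and $\#\{w: w\prec x,\ f(w)\ge f(x)\}\le 1$; $x$ is critical if both sets are empty, regular otherwise; $\mathrm{crit}(f)$ is the set of critical points. $f$ satisfies the Exclusion condition if for every regular $x$ exactly one of these two sets is nonempty. A matching on $X$ is a set $\mathcal M\subseteq X\times X$ such that $(x,y)\in\mathcal M$ implies $x\prec y$ and each element of $X$ belongs to at most one pair of $\mathcal M$. Let $\mathcal H_{\mathcal M}(X)$ be the directed graph obtained from $\mathcal H(X)$ by reversing the edges not in $\mathcal M$; $\mathcal M$ is a Morse matching if $\mathcal H_{\mathcal M}(X)$ has no directed cycles. The critical points $\mathrm{crit}(\mathcal M)$ are the elements not belonging to any pair of $\mathcal M$. A poset is two-wide if for any $x\prec z\prec y$ there is $z'\neq z$ with $x\prec z'\prec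 y$. *)

(* A finite poset is a [finPOrderType d]; the Morse function
   takes values in an arbitrary real field R (the paper uses R = ℝ; only the
   order of the values matters). *)
From HB Require Import structures.
From mathcomp Require Import all_boot all_order all_algebra.
Set Implicit Arguments. Unset Strict Implicit. Unset Printing Implicit Defensive.
Import Order.TTheory GRing.Theory Num.Theory.

Section Morse.
Context {d : Order.disp_t} {X : finPOrderType d}.

Definition covers (a b : X) : bool :=
  (Order.lt a b) && [forall c : X, ~~ ((Order.lt a c) && (Order.lt c b))].

Definition hasse : rel X := covers.

Context {R : realFieldType}.

Definition up_set (f : X -> R) (x : X) : {set X} :=
  [set y | covers x y && (f y <= f x)%R].
Definition down_set (f : X -> R) (x : X) : {set X} :=
  [set w | covers w x && (f x <= f w)%R].

Definition is_morse (f : X -> R) : Prop :=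
  forall x : X, #|up_set f x| <= 1 /\ #|down_set f x| <= 1.

Definition critical (f : X -> R) (x : X) : bool :=
  (up_set f x == set0) && (down_set f x == set0).

Definition crit (f : X -> R) : {set X} := [set x | critical f x].

Definition exclusion (f : X -> R) : Prop :=
  forall x : X, ~~ critical f x ->
    (up_set f x != set0) (+) (down_set f x != set0).

Definition Mf (f : X -> R) : {set X * X} :=
  [set p : X * X | covers p.1 p.2 && (f p.2 <= f p.1)%R].

End Morse.

Section Matching.
Context {d : Order.disp_t} {X : finPOrderType d}.

Definition is_matching (M : {set X * X}) : Prop :=
  (forall p, p \in M -> covers p.1 p.2) /\
  (forall x : X, #|[set p in M | (p.1 == x) || (p.2 == x)]| <= 1).

Definition hasseM (M : {set X * X}) : rel X :=
  fun a b => (covers a b && ((a, b) \in M)) || (covers b a && ((b, a) \notin M)).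

(* no directed cycle: no x reaches itself by a path of positive length *)
Definition acyclic (e : rel X) : Prop :=
  forall x y : X, e x y -> ~~ connect e y x.

Definition morse_matching (M : {set X * X}) : Prop :=
  is_matching M /\ acyclic (hasseM M).

Definition crit_matching (M : {set X * X}) : {set X} :=
  [set x | [forall p in M, (p.1 != x) && (p.2 != x)]].

Definition two_wide : Prop :=
  forall x z y : X, covers x z -> covers z y ->
    exists z' : X, z' != z /\ covers x z' /\ covers z' y.

End Matching.

(* Order X lexicographically by decreasing value of f, ties broken by the
   order of X. A matched edge w -> x of H_{M_f} goes up in X with
   f x <= f w, and a reversed unmatched edge x -> w goes down with
   f w < f x; both are strict descents in this order, so H_{M_f} is acyclic
   for every f. Morse plus Exclusion say that each x lies in at most one pair
   of M_f, and x is unmatched exactly when both of its sets are empty.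
   On a two-wide poset Exclusion is automatic: given w ≺ x ≺ y with
   f w >= f x >= f y, the other z with w ≺ z ≺ y satisfies
   f z < f y by Morse at y and f w < f z by Morse at w, whence
   f w < f y <= f w. *)
From HB Require Import structures.
From mathcomp Require Import all_boot all_order all_algebra.
Import Order.TTheory GRing.Theory Num.Theory.
Set Implicit Arguments. Unset Strict Implicit.

Section MorseMatching.
Context {d : Order.disp_t} {X : finPOrderType d} {R : realFieldType}.
Variable f : X -> R.

Lemma covers_lt (a b : X) : covers a b -> (a < b)%O.
Proof. by case/andP. Qed.

Lemma in_Mf_up (w x : X) : ((w, x) \in Mf f) = (x \in up_set f w).
Proof. by rewrite !inE. Qed.

Lemma in_Mf_down (w x : X) : ((w, x) \in Mf f) = (w \in down_set f x).
Proof. by rewrite !inE. Qed.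

Lemma Mf_fst_unique (w y y' : X) :
  is_morse f -> (w, y) \in Mf f -> (w, y') \in Mf f -> y = y'.
Proof.
by move=> /(_ w)[/card_le1_eqP up1 _]; rewrite !in_Mf_up => yu y'u; apply: up1.
Qed.

Lemma Mf_snd_unique (w w' y : X) :
  is_morse f -> (w, y) \in Mf f -> (w', y) \in Mf f -> w = w'.
Proof.
by move=> /(_ y)[_ /card_le1_eqP down1]; rewrite !in_Mf_down => wd w'd; apply: down1.
Qed.

Definition descends (a b : X) : bool :=
  (f b < f a)%R || ((f b == f a) && (a < b)%O).

Lemma descends_trans : transitive descends.
Proof.
move=> b a c; rewrite /descends.
case/orP=> [fba|/andP[/eqP-> ab]] /orP[fcb|/andP[/eqP-> bc]].
- by rewrite (lt_trans fcb fba).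
- by rewrite fba.
- by rewrite fcb.
- by rewrite eqxx (lt_trans ab bc) orbT.
Qed.

Lemma descends_irr : irreflexive descends.
Proof. by move=> a; rewrite /descends !ltxx andbF. Qed.

Lemma hasseM_Mf_descends (a b : X) : hasseM (Mf f) a b -> descends a b.
Proof.
rewrite /hasseM /descends !inE /=.
case/orP=> [/andP[cab /andP[_]] | /andP[cba]]; last by rewrite cba -ltNge => ->.
by rewrite le_eqVlt => /orP[/eqP->|->]; rewrite ?eqxx ?(covers_lt cab) ?orbT.
Qed.

Lemma Mf_acyclic : acyclic (hasseM (Mf f)).
Proof.
have path_descends x p :
    path (hasseM (Mf f)) x p -> p != [::] -> descends x (last x p).
  elim: p x => [|y [|z p] IH] x //= /andP[/hasseM_Mf_descends xy yp] _ //.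
  exact: descends_trans xy (IH y yp isT).
move=> x y /hasseM_Mf_descends xy; apply/negP => /connectP[[|z p] yp yx].
  by move: xy; rewrite /= in yx; rewrite -yx descends_irr.
have := descends_trans xy (path_descends _ _ yp isT).
by rewrite -yx descends_irr.
Qed.

Lemma Mf_matching : is_morse f -> exclusion f -> is_matching (Mf f).
Proof.
move=> morse excl; split=> [p|x]; first by rewrite inE => /andP[].
have not_both y w : (x, y) \in Mf f -> (w, x) \in Mf f -> False.
  rewrite in_Mf_up in_Mf_down => yu wd.
  have up0 : up_set f x != set0 by apply/set0Pn; exists y.
  have down0 : down_set f x != set0 by apply/set0Pn; exists w.
  have /excl : ~~ critical f x by rewrite /critical negb_and up0.
  by rewrite up0 down0.
apply/card_le1_eqP => -[a b] [a' b'] /setIdP[Mab /= Eab] /setIdP[Mab' /= Eab'].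
case/orP: Eab Mab => /eqP-> Mab; case/orP: Eab' Mab' => /eqP-> Mab'.
- by rewrite (Mf_fst_unique morse Mab Mab').
- by case: (not_both _ _ Mab Mab').
- by case: (not_both _ _ Mab' Mab).
- by rewrite (Mf_snd_unique morse Mab Mab').
Qed.

Lemma crit_matching_Mf : crit_matching (Mf f) = crit f.
Proof.
apply/setP => x; rewrite !inE /critical; apply/forallP/andP.
- move=> unmatched; split; apply/eqP/setP => y; rewrite !inE;
    apply/negbTE/andP => -[cov le].
    by move: (unmatched (x, y)); rewrite !inE /= cov le eqxx /=.
  by move: (unmatched (y, x)); rewrite !inE /= cov le eqxx andbF /=.
- case=> /eqP/setP up0 /eqP/setP down0 [a b]; apply/implyP => Mab /=.
  apply/andP; split; apply/eqP => ex; subst x.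
    by move: (up0 b); rewrite -in_Mf_up Mab inE.
  by move: (down0 a); rewrite -in_Mf_down Mab inE.
Qed.

Lemma Mf_morse_matching : is_morse f -> exclusion f -> morse_matching (Mf f).
Proof. by move=> morse excl; split; [exact: Mf_matching | exact: Mf_acyclic]. Qed.

Lemma two_wide_exclusion : two_wide (X := X) -> is_morse f -> exclusion f.
Proof.
move=> wide morse x; rewrite /critical negb_and.
case: (set0Pn (up_set f x)) => [[y yu]|_] //=.
case: (set0Pn (down_set f x)) => [[w wd]|_] //= _.
move: yu wd; rewrite !inE => /andP[cxy fyx] /andP[cwx fxw].
have [z [zx [cwz czy]]] := wide _ _ _ cwx cxy.
have fzy : (f z < f y)%R.
  rewrite ltNge; apply: contraNN zx => fyz; apply/eqP.
  by apply: (@Mf_snd_unique z x y morse); rewrite inE /= ?czy ?cxy ?fyz.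
have fwz : (f w < f z)%R.
  rewrite ltNge; apply: contraNN zx => fzw; apply/eqP.
  by apply: (@Mf_fst_unique w z x morse); rewrite inE /= ?cwz ?cwx ?fzw.
by have := lt_le_trans (lt_trans fwz fzy) (le_trans fyx fxw); rewrite ltxx.
Qed.

End MorseMatching.

Theorem mainTheorem6 (d : Order.disp_t) (X : finPOrderType d) (R : realFieldType) :
  (forall f : X -> R, is_morse f -> exclusion f ->
     morse_matching (Mf f) /\ crit_matching (Mf f) = crit f) /\
  (two_wide (X := X) ->
   forall f : X -> R, is_morse f ->
     morse_matching (Mf f) /\ crit f = crit_matching (Mf f)).
Proof.
split=> [f morse excl | wide f morse].
  by split; [exact: Mf_morse_matching | exact: crit_matching_Mf].
split; first exact: Mf_morse_matching (two_wide_exclusion wide morse).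
by rewrite crit_matching_Mf.
Qed.
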